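(* Let $\mathbf X$ be a design, $\lambda>0$, and $\boldsymbol\beta\in\mathbb R^p$ with fixed support $\mathcal A$, $|\mathcal A|=k$. Let $\mathcal Z_{\mathcal A}^{\pm}\subset\mathcal Z_{\mathcal A}$ be a set of $2^{k-1}$ sign vectors containing exactly one vector from each pair $\{\tilde{\boldsymbol z},-\tilde{\boldsymbol z}\}$ in $\mathcal Z_{\mathcal A}$. Then \[ \phi^{\pm}_\lambda(\mathbf X\mid\boldsymbol\beta)=2^{-(k-1)}\sum_{\tilde{\boldsymbol z}\in\mathcal Z_{\mathcal A}^{\pm}}\phi_\lambda(\mathbf X\mid\tilde{\mathbf Z}\boldsymbol\beta). \]
   Context: A design is an $n\times p$ matrix $\mathbf X$ with entries in $\{-1,+1\}$. Let $\mathbf P_1=n^{-1}\mathbf 1\mathbf 1^T$, $\mathbf V$ the diagonal matrix of the diagonal entries of $n^{-1}\mathbf X^T(\mathbf I-\mathbf P_1)\mathbf X$, $\mathbf F=(\mathbf I-\mathbf P_1)\mathbf X\mathbf V^{-1/2}$, $\mathbf C=n^{-1}\mathbf F^T\mathbf F$. For $\boldsymbol\beta$: support $\mathcal A=\{j:\beta_j\ne0\}$, complement $\mathcal I$, $\boldsymbol z=\mathrm{sign}(\boldsymbol\beta)$, $\mathbf Z_{\mathcal A}=\mathrm{Diag}(\boldsymbol z_{\mathcal A})$; subscripts denote subvectors/submatrices ($\mathbf F_{\mathcal T}$ columns, $\mathbf M_{\mathcal U\mathcal T}$ rows $\mathcal U$ and columns $\mathcal T$, $\mathbf M_{\mathcal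 T}=\mathbf M_{\mathcal T\mathcal T}$). Assume $\mathbf C_{\mathcal A}$ invertible and $\mathbf V_{\mathcal A}$ has positive diagonal. With $\mathbf P_{\mathcal A}=\mathbf F_{\mathcal A}(\mathbf F_{\mathcal A}^T\mathbf F_{\mathcal A})^{-1}\mathbf F_{\mathcal A}^T$, $\lambda_n=\lambda\sqrt n$, $\boldsymbol e\sim N(\mathbf 0,\mathbf I_n)$, $\boldsymbol u=-n^{-1/2}\mathbf Z_{\mathcal A}\mathbf C_{\mathcal A}^{-1}\mathbf F_{\mathcal A}^T\boldsymbol e+\lambda_n\mathbf Z_{\mathcal A}\mathbf C_{\mathcal A}^{-1}\boldsymbol z_{\mathcal A}$, $\boldsymbol v=n^{-1/2}\mathbf F_{\mathcal I}^T(\mathbf I-\mathbf P_{\mathcal A})\boldsymbol e+\lambda_n\mathbf C_{\mathcal I\mathcal A}\mathbf C_{\mathcal A}^{-1}\boldsymbol z_{\mathcal A}$, define $S_\lambda=\{\boldsymbol u<\sqrt n\mathbf Z_{\mathcal A}\mathbf V_{\mathcal A}^{1/2}\boldsymbol\beta_{\mathcal A}\}$, $I_\lambda=\{|\boldsymbol v|\le\lambda_n\mathbf 1\}$ (componentwise) and $\phi_\lambda(\mathbf X\mid\boldsymbol\beta)=P(S_\lambda\cap I_\lambda)$. Let $\mathcal Z_{\mathcal A}$ be the set of the $2^k$ vectors $\tilde{\boldsymbol z}\in\{-1,0,1\}^p$ with $\tilde z_j=0$ for $j\in\mathcal I$ and $\tilde z_j\in\{-1,1\}$ for $j\in\mathcal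 A$; for such $\tilde{\boldsymbol z}$ let $\tilde{\mathbf Z}$ be the $p\times p$ diagonal matrix with entries $\tilde z_j$ for $j\in\mathcal A$ and $1$ for $j\in\mathcal I$. The sign-averaged criterion is $\phi^{\pm}_\lambda(\mathbf X\mid\boldsymbol\beta)=2^{-k}\sum_{\tilde{\boldsymbol z}\in\mathcal Z_{\mathcal A}}\phi_\lambda(\mathbf X\mid\tilde{\mathbf Z}\boldsymbol\beta)$. *)

From HB Require Import structures.
From mathcomp Require Import all_boot all_order all_algebra.
From mathcomp Require Import all_classical all_reals all_analysis.
Set Implicit Arguments. Unset Strict Implicit. Unset Printing Implicit Defensive.
Import Order.TTheory GRing.Theory Num.Theory.
Local Open Scope classical_set_scope.
Local Open Scope ring_scope.

Section LassoCriterion.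
Variable R : realType.
Variables n p : nat.
Implicit Types (X : 'M[R]_(n, p)) (b : 'cV[R]_p) (A : {set 'I_p}).

Definition is_design X : Prop := forall i j, X i j = 1 \/ X i j = -1.

Definition nR : R := n%:R.
Definition P1 : 'M[R]_n := nR^-1 *: const_mx 1.
Definition Vdiag X (j : 'I_p) : R := (nR^-1 *: (X^T *m (1%:M - P1) *m X)) j j.
Definition Fmat X : 'M[R]_(n, p) :=
  (1%:M - P1) *m X *m diag_mx (\row_j (Num.sqrt (Vdiag X j))^-1).
Definition Cmat X : 'M[R]_p := nR^-1 *: ((Fmat X)^T *m Fmat X).

Definition supp b : {set 'I_p} := [set j | b j 0 != 0].

Definition idx (A : {set 'I_p}) (i : 'I_#|A|) : 'I_p := enum_val i.

Definition F_sub X A : 'M[R]_(n, #|A|) := colsub (@idx A) (Fmat X).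
Definition C_sub X A : 'M[R]_#|A| := mxsub (@idx A) (@idx A) (Cmat X).
Definition C_IA X A : 'M[R]_(#|~: A|, #|A|) := mxsub (@idx (~: A)) (@idx A) (Cmat X).
Definition P_sub X A : 'M[R]_n :=
  F_sub X A *m invmx ((F_sub X A)^T *m F_sub X A) *m (F_sub X A)^T.

Definition z_sub b : 'cV[R]_#|supp b| := \col_i Num.sg (b (@idx (supp b) i) 0).
Definition Z_sub b : 'M[R]_#|supp b| := diag_mx (z_sub b)^T.
Definition b_sub b : 'cV[R]_#|supp b| := \col_i b (@idx (supp b) i) 0.
Definition Vhalf_sub X A : 'M[R]_#|A| :=
  diag_mx (\row_i Num.sqrt (Vdiag X (@idx A i))).

Definition u_vec X (lam : R) b (e : 'cV[R]_n) : 'cV[R]_#|supp b| :=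
  - ((Num.sqrt nR)^-1 *:
       (Z_sub b *m invmx (C_sub X (supp b)) *m (F_sub X (supp b))^T *m e))
  + (lam * Num.sqrt nR) *: (Z_sub b *m invmx (C_sub X (supp b)) *m z_sub b).

Definition v_vec X (lam : R) b (e : 'cV[R]_n) : 'cV[R]_#|~: supp b| :=
  (Num.sqrt nR)^-1 *:
     ((F_sub X (~: supp b))^T *m (1%:M - P_sub X (supp b)) *m e)
  + (lam * Num.sqrt nR) *:
     (C_IA X (supp b) *m invmx (C_sub X (supp b)) *m z_sub b).

Definition S_event X (lam : R) b (e : 'cV[R]_n) : Prop :=
  forall i, u_vec X lam b e i 0 <
    Num.sqrt nR * (Z_sub b *m Vhalf_sub X (supp b) *m b_sub b) i 0.
Definition I_event X (lam : R) b (e : 'cV[R]_n) : Prop :=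
  forall i, `| v_vec X lam b e i 0 | <= lam * Num.sqrt nR.

(* e = (e_1, ..., e_n) ~ N(0, I_n): measurable components, each N(0,1),
   mutually independent (product rule for all families of Borel sets; taking
   B_i = setT gives the product rule for every subfamily). *)
Definition std_gaussian_vector (d : measure_display) (T : measurableType d)
    (P : probability T R) (e : 'I_n -> T -> R) : Prop :=
  [/\ (forall i, measurable_fun setT (e i)),
      (forall i (B : set R), measurable B ->
          P (e i @^-1` B) = normal_prob (0 : R) 1 B) &
      (forall B : 'I_n -> set R, (forall i, measurable (B i)) ->
          P [set w | forall i, B i (e i w)] = (\prod_i P (e i @^-1` B i))%E)].

Definition noise (T : Type) (e : 'I_n -> T -> R) (w : T) : 'cV[R]_n :=
  \col_i e i w.

Definition phi (d : measure_display) (T : measurableType d)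
    (P : probability T R) (e : 'I_n -> T -> R) X (lam : R) b : R :=
  fine (P [set w | S_event X lam b (noise e w) /\ I_event X lam b (noise e w)]).

Definition ZA_set A : set 'cV[R]_p :=
  [set z | forall j, (j \notin A -> z j 0 = 0) /\
                     (j \in A -> z j 0 = 1 \/ z j 0 = -1)].
Definition Ztil A (z : 'cV[R]_p) : 'M[R]_p :=
  diag_mx (\row_j (if j \in A then z j 0 else 1)).

Definition phi_pm (d : measure_display) (T : measurableType d)
    (P : probability T R) (e : 'I_n -> T -> R) X (lam : R) b : R :=
  (2 ^+ #|supp b|)^-1 *
    \sum_(z \in ZA_set (supp b)) phi P e X lam (Ztil (supp b) z *m b).

End LassoCriterion.

From HB Require Import structures.
From mathcomp Require Import all_boot all_order all_algebra.
From mathcomp Require Import all_classical all_reals all_analysis.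
From mathcomp Require Import measurable_realfun ring.
Import Order.TTheory GRing.Theory Num.Theory.
Local Open Scope classical_set_scope.
Local Open Scope ring_scope.
Set Implicit Arguments. Unset Strict Implicit. Unset Printing Implicit Defensive.

(* Sign flips of beta act on the criterion through the noise only.  Replacing
   beta by -beta negates z_A and Z_A, and since u and v are affine in e with
   constant parts linear in z_A, the event S_lambda /\ I_lambda for -beta at e
   is the event for beta at -e.  The noise is symmetric: -e is again a standard
   Gaussian vector, and the joint law of such a vector is determined on boxes,
   a pi-system generating the sigma-algebra of column vectors in which these
   events are measurable.  Hence phi_lambda(X | -beta) = phi_lambda(X | beta).
   As Ztil(-z) beta = - Ztil(z) beta, the summands of phi^pm for z and -z
   agree, and Z_A is the disjoint union of Z_A^pm and -Z_A^pm, so the sum over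
   Z_A is twice the sum over Z_A^pm. *)

Section MeasurableSets.
Variables (R : realType) (d : measure_display) (T : measurableType d).

Lemma measurable_set_ltr (f g : T -> R) :
  measurable_fun setT f -> measurable_fun setT g ->
  measurable [set x | f x < g x].
Proof.
move=> mf mg; rewrite -[X in measurable X]setTI.
exact: (measurable_fun_ltr mf mg measurableT (Y := [set true])).
Qed.

Lemma measurable_set_ler (f g : T -> R) :
  measurable_fun setT f -> measurable_fun setT g ->
  measurable [set x | f x <= g x].
Proof.
move=> mf mg; rewrite -[X in measurable X]setTI.
exact: (measurable_fun_ler mf mg measurableT (Y := [set true])).
Qed.

Lemma measurable_set_forall m (Q : 'I_m -> set T) :
  (forall i, measurable (Q i)) -> measurable [set x | forall i, Q i x].
Proof.
move=> mQ; rewrite (_ : [set x | _] = \bigcap_(i in setT) Q i).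
  by apply: fin_bigcap_measurable => //; exact: finite_finset.
by apply/seteqP; split=> x /= Qx i //; exact: Qx.
Qed.

End MeasurableSets.

(* For [s = 0], [normal_pdf] is the junk density of [`[0, 1]], which is not
   symmetric. *)
Lemma normal_prob0N (R : realType) (s : R) (B : set R) :
  s != 0 -> measurable B -> normal_prob 0 s (-%R @^-1` B) = normal_prob 0 s B.
Proof.
move=> s_neq0 mB; rewrite /normal_prob.
have pdfN x : normal_pdf 0 s (- x) = normal_pdf 0 s x.
  by rewrite /normal_pdf (negbTE s_neq0) /normal_fun !subr0 sqrrN.
have mpdf : measurable_fun setT (fun x : R => (normal_pdf 0 s x)%:E).
  by apply/measurable_EFinP; exact: measurable_normal_pdf.
transitivity (\int[lebesgue_measure]_(x in
    (-%R : R -> measurableTypeR R) @^-1` B)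
  ((fun x => (normal_pdf 0 s x)%:E) \o (-%R : R -> measurableTypeR R)) x)%E.
  by apply: eq_integral => x _ /=; rewrite pdfN.
rewrite -ge0_integral_pushforward //=.
- by apply: eq_measure_integral => A mA _; exact: lebesgue_measureN.
- exact: measurable_funS mpdf.
- by move=> y _; rewrite lee_fin normal_pdf_ge0.
Qed.

(* [R^o] rather than [R]: only the former is a pointedType, as required by
   [g_sigma_algebraType]. *)
Definition box_sets (R : realType) (n : nat) : set (set 'cV[R^o]_n) :=
  [set [set x : 'cV[R^o]_n | forall i, B i (x i 0)] |
     B in [set B : 'I_n -> set R | forall i, measurable (B i)]].

Notation cVbox R n := (g_sigma_algebraType (@box_sets R n)).

Section BoxSigmaAlgebra.
Variables (R : realType) (n : nat).

Lemma box_setsI : setI_closed (@box_sets R n).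
Proof.
move=> _ _ [B1 mB1 <-] [B2 mB2 <-]; exists (fun i => B1 i `&` B2 i).
  by move=> i; exact: measurableI.
by apply/seteqP; split=> x /= => [Bx|[B1x B2x] i]; [split=> i; case: (Bx i)|].
Qed.

Lemma measurable_coord (i : 'I_n) :
  measurable_fun setT (fun x : cVbox R n => x i 0).
Proof.
move=> _ B mB; rewrite setTI; apply: sub_sigma_algebra.
exists (fun j => if j == i then B else setT); first by move=> j; case: ifP.
apply/seteqP; split=> x /= => [/(_ i)|Bx j]; first by rewrite eqxx.
by case: ifP => // /eqP ->.
Qed.

Lemma measurable_affine_coord m (M : 'M[R]_(m, n)) (c : 'cV[R]_m) (i : 'I_m) :
  measurable_fun setT (fun x : cVbox R n => (M *m x + c) i 0).
Proof.
under eq_fun do rewrite !mxE.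
apply: measurable_funD => //; apply: measurable_sum => j.
by apply: measurable_funM => //; exact: measurable_coord.
Qed.

Lemma noise_preimage_box T (e : 'I_n -> T -> R) (B : 'I_n -> set R) :
  noise e @^-1` [set x : 'cV[R^o]_n | forall i, B i (x i 0)] =
  [set w | forall i, B i (e i w)].
Proof. by apply/seteqP; split=> w /= Bw i; move: (Bw i); rewrite mxE. Qed.

Lemma measurable_noise d (T : measurableType d) (e : 'I_n -> T -> R) :
  (forall i, measurable_fun setT (e i)) ->
  measurable_fun setT (noise e : T -> cVbox R n).
Proof.
move=> me.
apply: (@measurability _ _ T (cVbox R n) setT _ (@box_sets R n)) => //.
move=> _ [_ [B mB <-] <-]; rewrite setTI noise_preimage_box.
apply: measurable_set_forall => i; rewrite -[X in measurable X]setTI.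
exact: me.
Qed.

End BoxSigmaAlgebra.

Section StdGaussianVector.
Variables (R : realType) (n : nat).

Lemma std_gaussian_vectorN d (T : measurableType d) (P : probability T R)
    (e : 'I_n -> T -> R) :
  std_gaussian_vector P e -> std_gaussian_vector P (fun i w => - e i w).
Proof.
case=> me law indep.
have mN (B : set R) : measurable B -> measurable (-%R @^-1` B).
  by move=> mB; rewrite -[X in measurable X]setTI; exact: oppr_measurable.
split.
- by move=> i; apply: measurableT_comp => //; exact: oppr_measurable.
- move=> i B mB; rewrite (law i (-%R @^-1` B)) ?normal_prob0N ?oner_neq0 //.
  exact: mN.
- by move=> B mB; rewrite (indep (fun i => -%R @^-1` B i)) // => i; exact: mN.
Qed.

Lemma std_gaussian_vector_law d (T : measurableType d) (P : probability T R)
    (e : 'I_n -> T -> R) d' (T' : measurableType d') (P' : probability T' R)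
    (e' : 'I_n -> T' -> R) :
  std_gaussian_vector P e -> std_gaussian_vector P' e' ->
  forall E : set (cVbox R n), measurable E ->
  P (noise e @^-1` E) = P' (noise e' @^-1` E).
Proof.
case=> me law indep [me' law' indep'].
pose mu := distribution P (mfun_Sub (mem_set (measurable_noise me))).
pose mu' := distribution P' (mfun_Sub (mem_set (measurable_noise me'))).
apply: (@measure_unique _ _ (cVbox R n) (@box_sets R n) (fun=> setT) erefl
  (@box_setsI R n) _ _ mu mu').
- by move=> _; exists (fun=> setT) => //; apply/seteqP; split.
- by rewrite bigcup_const //; exists 0%N.
- move=> _ [B mB <-].
  rewrite -[LHS]/(P (noise e @^-1` _)) -[RHS]/(P' (noise e' @^-1` _)).
  rewrite !noise_preimage_box indep // indep' //.
  by apply: eq_bigr => i _; rewrite law // law'.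
- move=> _; rewrite -[X in (X < _)%E]/(P (noise e @^-1` setT)).
  by rewrite probability_setT ltry.
Qed.

Lemma std_gaussian_vector_symmetric d (T : measurableType d)
    (P : probability T R) (e : 'I_n -> T -> R) :
  std_gaussian_vector P e -> forall E : set (cVbox R n), measurable E ->
  P [set w | E (- noise e w)] = P [set w | E (noise e w)].
Proof.
move=> gauss E mE.
have noiseN w : - noise e w = noise (fun i w => - e i w) w.
  by apply/matrixP => i j; rewrite !mxE.
rewrite (_ : [set w | E (- noise e w)] = noise (fun i w => - e i w) @^-1` E).
  exact: std_gaussian_vector_law (std_gaussian_vectorN gauss) gauss E mE.
by apply/seteqP; split=> w; rewrite /= noiseN.
Qed.

End StdGaussianVector.

Section LassoSignFlip.
Variables (R : realType) (n p : nat).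
Implicit Types (X : 'M[R]_(n, p)) (lam : R) (A : {set 'I_p}) (c : 'cV[R]_p).
Implicit Type x : 'cV[R]_n.

(* The quantities of [S_event] and [I_event] with the index set [A] decoupled
   from the coefficient vector [c]; for [A = supp c] they are the original
   ones by definition, and [supp (- c) = supp c] can then be rewritten. *)
Definition z_on A c : 'cV[R]_#|A| := \col_i Num.sg (c (@idx p A i) 0).
Definition Z_on A c : 'M[R]_#|A| := diag_mx (z_on A c)^T.
Definition b_on A c : 'cV[R]_#|A| := \col_i c (@idx p A i) 0.

Definition u_on X lam A c x : 'cV[R]_#|A| :=
  - ((Num.sqrt (nR R n))^-1 *:
       (Z_on A c *m invmx (C_sub X A) *m (F_sub X A)^T *m x))
  + (lam * Num.sqrt (nR R n)) *: (Z_on A c *m invmx (C_sub X A) *m z_on A c).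

Definition v_on X lam A c x : 'cV[R]_#|~: A| :=
  (Num.sqrt (nR R n))^-1 *: ((F_sub X (~: A))^T *m (1%:M - P_sub X A) *m x)
  + (lam * Num.sqrt (nR R n)) *: (C_IA X A *m invmx (C_sub X A) *m z_on A c).

Definition S_on X lam A c x : Prop :=
  forall i, u_on X lam A c x i 0 <
    Num.sqrt (nR R n) * (Z_on A c *m Vhalf_sub X A *m b_on A c) i 0.

Definition I_on X lam A c x : Prop :=
  forall i, `|v_on X lam A c x i 0| <= lam * Num.sqrt (nR R n).

Lemma S_eventE X lam c x : S_event X lam c x = S_on X lam (supp c) c x.
Proof. by []. Qed.

Lemma I_eventE X lam c x : I_event X lam c x = I_on X lam (supp c) c x.
Proof. by []. Qed.

Lemma suppN c : supp (- c) = supp c.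
Proof. by apply/setP => j; rewrite !inE mxE oppr_eq0. Qed.

Lemma z_onN A c : z_on A (- c) = - z_on A c.
Proof. by apply/matrixP => i j; rewrite !mxE sgrN. Qed.

Lemma Z_onN A c : Z_on A (- c) = - Z_on A c.
Proof. by apply/matrixP => i j; rewrite !mxE sgrN mulNrn. Qed.

Lemma b_onN A c : b_on A (- c) = - b_on A c.
Proof. by apply/matrixP => i j; rewrite !mxE. Qed.

Lemma u_onN X lam A c x : u_on X lam A (- c) x = u_on X lam A c (- x).
Proof. by rewrite /u_on Z_onN z_onN !mulNmx !mulmxN opprK. Qed.

Lemma v_onN X lam A c x i :
  v_on X lam A (- c) x i 0 = - v_on X lam A c (- x) i 0.
Proof.
have -> : v_on X lam A (- c) x = - v_on X lam A c (- x).
  by rewrite /v_on z_onN !mulmxN !scalerN opprD opprK.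
by rewrite mxE.
Qed.

Lemma S_onN X lam A c x : S_on X lam A (- c) x <-> S_on X lam A c (- x).
Proof. by rewrite /S_on u_onN Z_onN b_onN !mulNmx mulmxN opprK. Qed.

Lemma I_onN X lam A c x : I_on X lam A (- c) x <-> I_on X lam A c (- x).
Proof. by rewrite /I_on; split=> Ic i; move: (Ic i); rewrite v_onN normrN. Qed.

End LassoSignFlip.

Section LassoEvent.
Variables (R : realType) (n p : nat).
Variables (X : 'M[R]_(n, p)) (lam : R).

Lemma measurable_lasso_event A (c : 'cV[R]_p) :
  measurable [set x : cVbox R n | S_on X lam A c x /\ I_on X lam A c x].
Proof.
pose s := Num.sqrt (nR R n).
pose G := Z_on A c *m invmx (C_sub X A).
have u_affine x : u_on X lam A c x =
    - (s^-1 *: (G *m (F_sub X A)^T)) *m x + (lam * s) *: (G *m z_on A c).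
  by rewrite /u_on mulNmx -scalemxAl.
have v_affine x : v_on X lam A c x =
    (s^-1 *: ((F_sub X (~: A))^T *m (1%:M - P_sub X A))) *m x
    + (lam * s) *: (C_IA X A *m invmx (C_sub X A) *m z_on A c).
  by rewrite /v_on -scalemxAl.
apply: measurableI; apply: measurable_set_forall => i.
- apply: measurable_set_ltr => //.
  under eq_fun do rewrite u_affine; exact: measurable_affine_coord.
- apply: measurable_set_ler => //; apply: measurableT_comp => //.
  under eq_fun do rewrite v_affine; exact: measurable_affine_coord.
Qed.

Lemma phiN d (T : measurableType d) (P : probability T R) (e : 'I_n -> T -> R)
    (c : 'cV[R]_p) :
  std_gaussian_vector P e -> phi P e X lam (- c) = phi P e X lam c.
Proof.
move=> gauss; rewrite /phi -(std_gaussian_vector_symmetric gauss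
  (measurable_lasso_event (supp c) c)).
congr (fine (P _)); apply/seteqP.
by split=> w; rewrite /= S_eventE I_eventE suppN S_onN I_onN.
Qed.

End LassoEvent.

Lemma fsbig_involution_half (T : choiceType) (V : nmodType) (iota : T -> T)
    (S H : set T) (f : T -> V) :
  involutive iota -> finite_set S -> (forall x, S x -> S (iota x)) ->
  H `<=` S -> (forall x, S x -> H x <-> ~ H (iota x)) ->
  (forall x, f (iota x) = f x) ->
  \sum_(x \in S) f x = (\sum_(x \in H) f x) *+ 2.
Proof.
move=> iotaK finS S_iota HS H_half f_iota.
have S_split : S = H `|` iota @` H.
  apply/seteqP; split=> [x Sx|x [/HS //|[y Hy <-]]]; last exact/S_iota/HS.
  have [Hx|nHx] := pselect (H x); [by left|right].
  exists (iota x); last exact: iotaK.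
  by apply: contrapT => nHix; apply: nHx; exact/(H_half x Sx).
have finH : finite_set H by exact: sub_finite_set finS.
rewrite S_split fsbigU //; last 2 first.
- exact: finite_image.
- move=> x [Hx [y Hy yx]]; have [/(_ Hy) + _] := H_half y (HS y Hy).
  by rewrite yx.
rewrite fsbig_image; last by move=> x y _ _; exact: inv_inj.
rewrite (_ : \sum_(x \in H) f (iota x) = \sum_(x \in H) f x) ?mulr2n //.
by apply: eq_fsbigr => x _; exact: f_iota.
Qed.

Section SignVectors.
Variables (R : realType) (p : nat).
Implicit Types (A : {set 'I_p}) (z : 'cV[R]_p).

Lemma ZA_setN A z : ZA_set A z -> ZA_set A (- z).
Proof.
move=> Zz j; have [off on] := Zz j; rewrite !mxE.
split=> [/off ->|/on [->|->]]; rewrite ?oppr0 ?opprK; by [|right|left].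
Qed.

Lemma ZA_set_finite A : finite_set (@ZA_set R p A).
Proof.
pose sign_vector (s : {ffun 'I_p -> bool}) : 'cV[R]_p :=
  \col_j (if j \in A then (if s j then 1 else -1) else 0).
apply: (@sub_finite_set _ _ (range sign_vector)); last first.
  by apply: finite_image; exact: finite_finset.
move=> z Zz; exists [ffun j => z j 0 == 1] => //.
apply/matrixP => j k; rewrite (ord1 k) !mxE ffunE.
have [off on] := Zz j; case: ifP => jA; last by rewrite off ?jA.
by case: (on jA) => ->; rewrite ?eqxx // eq_sym -addr_eq0 -mulr2n pnatr_eq0.
Qed.

Lemma Ztil_mulmxN (b z : 'cV[R]_p) :
  Ztil (supp b) (- z) *m b = - (Ztil (supp b) z *m b).
Proof.
apply/matrixP => j k; rewrite /Ztil !mul_diag_mx !mxE (ord1 k).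
case: ifPn => [_|]; first by rewrite mulNr.
by rewrite inE negbK => /eqP ->; rewrite mulr0 oppr0.
Qed.

End SignVectors.

Theorem corollary1 (R : realType) (n p : nat) (d : measure_display)
    (T : measurableType d) (P : probability T R) (e : 'I_n -> T -> R)
    (X : 'M[R]_(n, p)) (lam : R) (b : 'cV[R]_p) (Zpm : set 'cV[R]_p) :
  std_gaussian_vector P e ->
  is_design X ->
  0 < lam ->
  (0 < #|supp b|)%N ->
  C_sub X (supp b) \in unitmx ->
  (forall j, j \in supp b -> 0 < Vdiag X j) ->
  Zpm `<=` ZA_set (supp b) ->
  (forall z, ZA_set (supp b) z -> (Zpm z <-> ~ Zpm (- z))) ->
  phi_pm P e X lam b =
    (2 ^+ (#|supp b|.-1))^-1 *
      \sum_(z \in Zpm) phi P e X lam (Ztil (supp b) z *m b).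
Proof.
move=> gauss _ _ k_gt0 _ _ Zpm_sub Zpm_half.
rewrite /phi_pm (fsbig_involution_half (iota := -%R) (H := Zpm)) //.
- rewrite -(prednK k_gt0) exprS /=; field.
  by rewrite expf_neq0 // pnatr_eq0.
- exact: opprK.
- exact: ZA_set_finite.
- exact: ZA_setN.
- by move=> z; rewrite Ztil_mulmxN phiN.
Qed.
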